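(* (1) Let $(Y^*,Y,X)$ be random variables with $Y^*,Y\in\{0,1\}$, $X=(\tilde X,Z)\in\mathcal X$, $\tilde X\in\tilde{\mathcal X}$, $Z$ taking values in a finite set $\mathcal Z$. Let $p(x)=\Pr(Y=1\mid X=x)$, $p^*(x)=\Pr(Y^*=1\mid X=x)$, $\underline p_z(\tilde x)=\inf_{z\in\mathcal Z}p(\tilde x,z)$, $\bar p_z(\tilde x)=\sup_{z\in\mathcal Z}p(\tilde x,z)$, $L_1(x)=\frac{p(x)-\underline p_z(\tilde x)}{1-\underline p_z(\tilde x)}$, $U_1(x)=\frac{p(x)}{\bar p_z(\tilde x)}$. Assume: for all $x=(\tilde x,z)$ and $y\in\{0,1\}$, $\Pr(Y=1-y\mid Y^*=y,X=x)=\Pr(Y=1-y\mid Y^*=y,\tilde X=\tilde x)$; for all $\tilde x$, $\Pr(Y=0\mid Y^*=1,\tilde x)+\Pr(Y=1\mid Y^*=0,\tilde x)\le1$; and for all $\tilde x$, $\bar p_z(\tilde x)>0$ and $\underline p_z(\tilde x)<1$. Then the sharp bounds for $p^*(x)$ are $[p(x),U_1(x)]$ when $\Pr(Y=1\mid Y^*=0,\tilde x)=0$, and $[L_1(x),p(x)]$ when $\Pr(Y=0\mid Y^*=1,\tilde x)=0$. (2) Let $(Y^*,Y,X,W)$ be random variables with $Y^*,Y\in\{0,1\}$, $X\in\mathcal X$, $W$ taking values in a finite set of reals $\mathcal W$. Let $p^*(x)=\Pr(Y^*=1\mid X=x)$, $p_W(x,w)=\Pr(Y=1\mid X=x,W=w)$,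 $\underline p_w(x,w)=\inf_{\tilde w\le w}p_W(x,\tilde w)$, $\bar p_w(x,w)=\sup_{\tilde w\le w}p_W(x,\tilde w)$ (over $\tilde w\in\mathcal W$), $L_2(x)=\sup_{w\in\mathcal W}\frac{p_W(x,w)-\underline p_w(x,w)}{1-\underline p_w(x,w)}$, $U_2(x)=\inf_{w\in\mathcal W}\frac{p_W(x,w)}{\bar p_w(x,w)}$. Assume: $\Pr(Y^*=1\mid x,w)=p^*(x)$ for all $x,w$; for all $x$, $y\in\{0,1\}$ and $w_1>w_2$ in $\mathcal W$, $\Pr(Y=1-y\mid Y^*=y,x,w_1)\le\Pr(Y=1-y\mid Y^*=y,x,w_2)$; for all $x,w$, $\Pr(Y=1\mid Y^*=0,x,w)+\Pr(Y=0\mid Y^*=1,x,w)\le1$ and $0<p_W(x,w)<1$. Then the sharp bounds for $p^*(x)$ are $[\sup_{w\in\mathcal W}p_W(x,w),U_2(x)]$ when $\Pr(Y=1\mid Y^*=0,x,w)=0$, and $[L_2(x),\inf_{w\in\mathcal W}p_W(x,w)]$ when $\Pr(Y=0\mid Y^*=1,x,w)=0$.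
   Context: $Y^*$ is the true (unobserved) binary outcome and $Y$ the observed, possibly misreported outcome; conditioning on $\tilde x$ (resp. $x,w$) means conditioning on $\tilde X=\tilde x$ (resp. $X=x,W=w$). ''Sharp'' means no tighter bounds on $p^*(x)$ are implied by the assumptions and the distribution of the observed variables. *)

From HB Require Import structures.
From mathcomp Require Import all_boot all_order all_algebra.
Set Implicit Arguments. Unset Strict Implicit. Unset Printing Implicit Defensive.
Import Order.TTheory GRing.Theory Num.Theory.
Local Open Scope ring_scope.

(* Part (1): X = (Xt, Z), Z finite.  Model primitives:                *)
(*   ps xt z  = p*(xt,z) = Pr(Y*=1 | X=(xt,z))                         *)
(*   a0 xt    = Pr(Y=1 | Y*=0, Xt=xt)   (= Pr(Y=1|Y*=0,X=(xt,z)), all z) *)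
(*   a1 xt    = Pr(Y=0 | Y*=1, Xt=xt)   (= Pr(Y=0|Y*=1,X=(xt,z)), all z) *)
(* The misclassification rates depend on xt only: this encodes the    *)
(* assumption Pr(Y=1-y|Y*=y,X=x) = Pr(Y=1-y|Y*=y,Xt=xt).               *)

Section Part1.
Variables (R : realFieldType) (Xt : Type) (Z : finType).

Definition valid1 (ps : Xt -> Z -> R) (a0 a1 : Xt -> R) : Prop :=
  (forall xt z, 0 <= ps xt z <= 1) /\
  (forall xt, [/\ 0 <= a0 xt <= 1, 0 <= a1 xt <= 1 & a0 xt + a1 xt <= 1]).

(* Pr(Y=1 | X=(xt,z)) implied by the latent model (law of total prob.) *)
Definition obs1 (ps : Xt -> Z -> R) (a0 a1 : Xt -> R) (xt : Xt) (z : Z) : R :=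
  a0 xt * (1 - ps xt z) + (1 - a1 xt) * ps xt z.

Definition generates1 (p : Xt -> Z -> R) ps a0 a1 : Prop :=
  forall xt z, p xt z = obs1 ps a0 a1 xt z.

(* sup_z / inf_z of p(xt, .) over the finite nonempty set Z (z0 : Z   *)
(* only serves as the starting value of the fold).                   *)
Definition psupZ (p : Xt -> Z -> R) (xt : Xt) (z0 : Z) : R :=
  \big[Num.max/p xt z0]_(z : Z) p xt z.
Definition pinfZ (p : Xt -> Z -> R) (xt : Xt) (z0 : Z) : R :=
  \big[Num.min/p xt z0]_(z : Z) p xt z.

Definition L1 (p : Xt -> Z -> R) (xt : Xt) (z : Z) : R :=
  (p xt z - pinfZ p xt z) / (1 - pinfZ p xt z).
Definition U1 (p : Xt -> Z -> R) (xt : Xt) (z : Z) : R :=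
  p xt z / psupZ p xt z.

(* Identified set for p*(xt,z) under the extra restriction that       *)
(* Pr(Y=1|Y*=0,xt) = 0 (resp. Pr(Y=0|Y*=1,xt) = 0).                    *)
Definition ident1_no_fp (p : Xt -> Z -> R) (xt : Xt) (z : Z) (s : R) : Prop :=
  exists ps a0 a1, [/\ valid1 ps a0 a1, generates1 p ps a0 a1, a0 xt = 0
                     & ps xt z = s].
Definition ident1_no_fn (p : Xt -> Z -> R) (xt : Xt) (z : Z) (s : R) : Prop :=
  exists ps a0 a1, [/\ valid1 ps a0 a1, generates1 p ps a0 a1, a1 xt = 0
                     & ps xt z = s].
End Part1.

(* Part (2): W takes values in the finite set of reals Ws (a seq).    *)
(*   ps x     = p*(x) = Pr(Y*=1 | X=x) = Pr(Y*=1 | X=x, W=w)  for all w *)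
(*   a0 x w   = Pr(Y=1 | Y*=0, X=x, W=w)                               *)
(*   a1 x w   = Pr(Y=0 | Y*=1, X=x, W=w)                               *)

Section Part2.
Variables (R : realFieldType) (X : Type).

Definition valid2 (Ws : seq R) (ps : X -> R) (a0 a1 : X -> R -> R) : Prop :=
  [/\ (forall x, 0 <= ps x <= 1),
      (forall x w, w \in Ws ->
         [/\ 0 <= a0 x w <= 1, 0 <= a1 x w <= 1 & a0 x w + a1 x w <= 1])
    & (forall x w1 w2, w1 \in Ws -> w2 \in Ws -> w2 < w1 ->
         a0 x w1 <= a0 x w2 /\ a1 x w1 <= a1 x w2)].

Definition obs2 (ps : X -> R) (a0 a1 : X -> R -> R) (x : X) (w : R) : R :=
  a0 x w * (1 - ps x) + (1 - a1 x w) * ps x.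

Definition generates2 (Ws : seq R) (pW : X -> R -> R) ps a0 a1 : Prop :=
  forall x w, w \in Ws -> pW x w = obs2 ps a0 a1 x w.

(* sup / inf over w in Ws (Ws nonempty; head is the fold's start). *)
Definition supW (Ws : seq R) (f : R -> R) : R :=
  \big[Num.max/f (head 0 Ws)]_(w <- Ws) f w.
Definition infW (Ws : seq R) (f : R -> R) : R :=
  \big[Num.min/f (head 0 Ws)]_(w <- Ws) f w.

Definition pbar_w (Ws : seq R) (pW : X -> R -> R) (x : X) (w : R) : R :=
  \big[Num.max/pW x w]_(wt <- Ws | wt <= w) pW x wt.
Definition plow_w (Ws : seq R) (pW : X -> R -> R) (x : X) (w : R) : R :=
  \big[Num.min/pW x w]_(wt <- Ws | wt <= w) pW x wt.

Definition L2 (Ws : seq R) (pW : X -> R -> R) (x : X) : R :=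
  supW Ws (fun w => (pW x w - plow_w Ws pW x w) / (1 - plow_w Ws pW x w)).
Definition U2 (Ws : seq R) (pW : X -> R -> R) (x : X) : R :=
  infW Ws (fun w => pW x w / pbar_w Ws pW x w).

Definition ident2_no_fp (Ws : seq R) (pW : X -> R -> R) (x : X) (s : R) : Prop :=
  exists ps a0 a1, [/\ valid2 Ws ps a0 a1, generates2 Ws pW ps a0 a1,
                      (forall w, w \in Ws -> a0 x w = 0) & ps x = s].
Definition ident2_no_fn (Ws : seq R) (pW : X -> R -> R) (x : X) (s : R) : Prop :=
  exists ps a0 a1, [/\ valid2 Ws ps a0 a1, generates2 Ws pW ps a0 a1,
                      (forall w, w \in Ws -> a1 x w = 0) & ps x = s].
End Part2.

From HB Require Import structures.
From mathcomp Require Import all_boot all_order all_algebra.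
From mathcomp Require Import ring lra.
From Stdlib Require Import ClassicalEpsilon.
Set Implicit Arguments. Unset Strict Implicit. Unset Printing Implicit Defensive.
Import Order.TTheory GRing.Theory Num.Theory.
Local Open Scope ring_scope.

(* Without false positives at the conditioning value the observed probability
   factors as p = (1 - a1) p*, where the detection rate 1 - a1 does not depend
   on the instrument (part 1) or is nondecreasing in it (part 2).  Hence
   p <= p*.  In part 1 the common rate is at least sup_z p, so
   p* <= p / sup_z p, and every value in between is realised by dividing p by
   a rate c in [sup_z p, 1].  In part 2 the factorisation forces p_W(x, .) to
   be nondecreasing, so U_2 = 1 and the identified set is [sup_w p_W, 1].
   The restrictions at distinct covariate values are independent, so a model
   can be altered at a single value and the analysis is local.  The case
   without false negatives reduces to the previous one by relabelling Y as
   1 - Y, which swaps the two misreporting rates. *)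

Lemma exists_update (A B : Type) (P : A -> B -> Prop) (g : A -> B) (a : A) (b : B) :
  (forall a', P a' (g a')) -> P a b ->
  exists g' : A -> B, (forall a', P a' (g' a')) /\ g' a = b.
Proof.
move=> Pg Pb.
exists (fun a' => if excluded_middle_informative (a' = a) then b else g a').
by split=> [a'|]; case: excluded_middle_informative => //= eq_a; subst.
Qed.

Lemma bigmax_compl (R : realDomainType) (I : Type) (r : seq I) (P : pred I)
    (F : I -> R) (x : R) :
  \big[Num.max/1 - x]_(i <- r | P i) (1 - F i) =
  1 - \big[Num.min/x]_(i <- r | P i) F i.
Proof.
apply/esym/(big_morph (fun y => 1 - y)) => // a b.
by case: (lerP a b) => ab; [rewrite max_l | rewrite max_r]; lra.
Qed.

Section FiniteInstrument.
Variables (R : realFieldType) (Xt : Type) (Z : finType).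
Implicit Types (p : Xt -> Z -> R) (q f : Z -> R).

Definition model1_at q f (b0 b1 : R) : Prop :=
  [/\ forall z, 0 <= f z <= 1, 0 <= b0 <= 1, 0 <= b1 <= 1, b0 + b1 <= 1
    & forall z, q z = b0 * (1 - f z) + (1 - b1) * f z].

Lemma model1P p ps a0 a1 :
  valid1 ps a0 a1 /\ generates1 p ps a0 a1 <->
  forall xt, model1_at (p xt) (ps xt) (a0 xt) (a1 xt).
Proof.
split=> [[[ps01 a01] gen] xt | loc].
  by have [? ? ?] := a01 xt; split.
by split; first split; move=> xt; have [] := loc xt.
Qed.

Lemma model1_at_obs_range q f b0 b1 z : model1_at q f b0 b1 -> 0 <= q z <= 1.
Proof.
by case=> /(_ z) /andP[? ?] /andP[? ?] /andP[? ?] ? ->; apply/andP; split; nra.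
Qed.

Lemma model1_update p ps a0 a1 xt f b0 b1 :
  valid1 ps a0 a1 /\ generates1 p ps a0 a1 -> model1_at (p xt) f b0 b1 ->
  exists ps' a0' a1', [/\ valid1 ps' a0' a1', generates1 p ps' a0' a1',
                         ps' xt = f, a0' xt = b0 & a1' xt = b1].
Proof.
move=> /model1P loc loc_xt.
have [g [gP gxt]] := exists_update
  (P := fun xt' (m : ((Z -> R) * R * R)%type) => model1_at (p xt') m.1.1 m.1.2 m.2)
  (g := fun xt' => (ps xt', a0 xt', a1 xt')) (b := (f, b0, b1)) loc loc_xt.
exists (fun xt' => (g xt').1.1), (fun xt' => (g xt').1.2), (fun xt' => (g xt').2).
by have [_ /(_ gP) [? ?]] := model1P p (fun xt' => (g xt').1.1)
  (fun xt' => (g xt').1.2) (fun xt' => (g xt').2); rewrite gxt.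
Qed.

Lemma model1_compl p p' ps ps' a0 a1 :
  (forall xt z, p' xt z = 1 - p xt z) -> (forall xt z, ps' xt z = 1 - ps xt z) ->
  valid1 ps a0 a1 /\ generates1 p ps a0 a1 ->
  valid1 ps' a1 a0 /\ generates1 p' ps' a1 a0.
Proof.
move=> p'E ps'E /model1P loc; apply/model1P => xt.
have [ps01 ? ? ? pE] := loc xt; split=> // [z||z].
- by rewrite ps'E; have /andP[? ?] := ps01 z; apply/andP; split; lra.
- by rewrite addrC.
- by rewrite p'E ps'E pE; ring.
Qed.

Lemma ident1_no_fn_compl p xt z s :
  ident1_no_fn p xt z s <-> ident1_no_fp (fun xt z => 1 - p xt z) xt z (1 - s).
Proof.
split=> [[ps [a0 [a1 [v gen a1xt <-]]]] | [ps [a0 [a1 [v gen a0xt pss]]]]].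
  exists (fun xt z => 1 - ps xt z), a1, a0.
  by have [] := @model1_compl p _ ps _ a0 a1
    (fun _ _ => erefl) (fun _ _ => erefl) (conj v gen).
exists (fun xt z => 1 - ps xt z), a1, a0.
have [] := @model1_compl _ p ps _ a0 a1 _ (fun _ _ => erefl) (conj v gen).
  by move=> ? ?; rewrite opprB addrC subrK.
by move=> ? ?; split; rewrite // pss opprB addrC subrK.
Qed.

Lemma no_fp1_model q c :
  (forall z, 0 <= q z <= c) -> 0 < c <= 1 -> model1_at q (fun z => q z / c) 0 (1 - c).
Proof.
move=> q0c /andP[c0 c1]; split=> [z||||z].
- have /andP[q0 qc] := q0c z.
  by rewrite divr_ge0 ?(ltW c0) //= ler_pdivrMr // mul1r.
- by rewrite lexx ler01.
- by apply/andP; split; lra.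
- lra.
- by field; rewrite gt_eqF.
Qed.

Lemma no_fp1_range q z s :
  (forall z', 0 <= q z' <= 1) -> 0 < \big[Num.max/q z]_z' q z' ->
  (exists f b1, model1_at q f 0 b1 /\ f z = s) <->
  q z <= s <= q z / \big[Num.max/q z]_z' q z'.
Proof.
set M := \big[_/_]_z' _ => q01 M0.
have qM z' : q z' <= M by exact: le_bigmax.
split=> [[f [b1 [[f01 _ /andP[b10 b11] _ qE] <-]]] | /andP[qs sM]].
  have qE' z' : q z' = (1 - b1) * f z' by rewrite qE mul0r add0r.
  have M_le : M <= 1 - b1.
    by apply: bigmax_le => [|z' _]; rewrite qE'; [move: (f01 z) | move: (f01 z')];
      case/andP; nra.
  have /andP[fz0 fz1] := f01 z.
  by rewrite ler_pdivlMr // qE'; apply/andP; split; nra.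
have [c [Mc c1 <-]] : exists c, [/\ M <= c, c <= 1 & q z / c = s].
  have /andP[qz0 qz1] := q01 z.
  have [q0|qn0] := eqVneq (q z) 0.
    exists 1; split=> //; last by rewrite divr1; rewrite q0 mul0r in sM; lra.
    by apply: bigmax_le => [|z' _]; [exact: qz1 | case/andP: (q01 z')].
  have s0 : 0 < s by apply: lt_le_trans qs; rewrite lt_def qn0.
  exists (q z / s); split.
  - by rewrite ler_pdivlMr // mulrC -ler_pdivlMr.
  - by rewrite ler_pdivrMr // mul1r.
  - by rewrite invf_div mulrC divfK.
exists (fun z' => q z' / c), (1 - c); split=> //; apply: no_fp1_model.
  by move=> z'; have /andP[q0 _] := q01 z'; rewrite q0 (le_trans (qM z')).
by rewrite c1 (lt_le_trans M0).
Qed.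

Lemma ident1_no_fp_range p xt z :
  0 < psupZ p xt z -> (exists ps a0 a1, valid1 ps a0 a1 /\ generates1 p ps a0 a1) ->
  forall s, ident1_no_fp p xt z s <-> p xt z <= s <= U1 p xt z.
Proof.
move=> M0 [ps0 [a00 [a10 model0]]] s.
have /model1P loc0 := model0.
rewrite -no_fp1_range // => [|z']; last exact: model1_at_obs_range (loc0 xt).
split=> [[ps [a0 [a1 [v gen a0xt <-]]]] | [f [b1 [loc <-]]]].
  have /model1P loc := conj v gen.
  by exists (ps xt), (a1 xt); rewrite -a0xt.
have [ps [a0 [a1 [v gen psxt a0xt _]]]] := model1_update model0 loc.
by exists ps, a0, a1; rewrite psxt.
Qed.

Lemma ident1_no_fn_range p xt z :
  pinfZ p xt z < 1 -> (exists ps a0 a1, valid1 ps a0 a1 /\ generates1 p ps a0 a1) ->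
  forall s, ident1_no_fn p xt z s <-> L1 p xt z <= s <= p xt z.
Proof.
move=> m1 [ps [a0 [a1 model]]] s.
have psupZ_compl : psupZ (fun xt z => 1 - p xt z) xt z = 1 - pinfZ p xt z.
  exact: bigmax_compl.
have model' : exists ps a0 a1,
    valid1 ps a0 a1 /\ generates1 (fun xt z => 1 - p xt z) ps a0 a1.
  by exists (fun xt z => 1 - ps xt z), a1, a0; exact: model1_compl.
rewrite ident1_no_fn_compl ident1_no_fp_range ?psupZ_compl ?subr_gt0 //.
rewrite /U1 /L1 psupZ_compl ler_pdivlMr ?subr_gt0 // ler_pdivrMr ?subr_gt0 //.
by split=> /andP[? ?]; apply/andP; split; lra.
Qed.
End FiniteInstrument.

Section MonotoneInstrument.
Variables (R : realFieldType) (X : Type) (Ws : seq R).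
Implicit Types (pW : X -> R -> R) (ps : X -> R) (q f : R -> R).

Lemma head_in : Ws != [::] -> head 0 Ws \in Ws.
Proof. by case: Ws => // w Ws' _; exact: mem_head. Qed.

Lemma supW_cst f c : Ws != [::] -> {in Ws, forall w, f w = c} -> supW Ws f = c.
Proof.
move=> /head_in hW fc; rewrite /supW fc // big_seq.
by apply: big1_idem; [exact: maxxx | exact: fc].
Qed.

Lemma infW_cst f c : Ws != [::] -> {in Ws, forall w, f w = c} -> infW Ws f = c.
Proof.
move=> /head_in hW fc; rewrite /infW fc // big_seq.
by apply: big1_idem; [exact: minxx | exact: fc].
Qed.

Lemma pbar_w_nondecr pW x w :
  {in Ws &, {homo pW x : w1 w2 / w1 <= w2}} -> w \in Ws -> pbar_w Ws pW x w = pW x w.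
Proof.
move=> mono wW; apply/le_anti/andP; split; last exact: bigmax_ge_id.
by rewrite /pbar_w big_seq_cond; apply: bigmax_le => // wt /andP[wtW wtw]; exact: mono.
Qed.

Lemma plow_w_nonincr pW x w :
  {in Ws &, {homo pW x : w1 w2 / w1 <= w2 >-> w2 <= w1}} -> w \in Ws ->
  plow_w Ws pW x w = pW x w.
Proof.
move=> mono wW; apply/le_anti/andP; split; first exact: bigmin_le_id.
by rewrite /plow_w big_seq_cond; apply: le_bigmin => // wt /andP[wtW wtw]; exact: mono.
Qed.

Lemma U2_nondecr pW x :
  Ws != [::] -> {in Ws, forall w, 0 < pW x w} ->
  {in Ws &, {homo pW x : w1 w2 / w1 <= w2}} -> U2 Ws pW x = 1.
Proof.
move=> Wn0 pW0 mono; apply: infW_cst => // w wW.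
by rewrite pbar_w_nondecr // divff // gt_eqF // pW0.
Qed.

Lemma L2_nonincr pW x :
  Ws != [::] -> {in Ws &, {homo pW x : w1 w2 / w1 <= w2 >-> w2 <= w1}} -> L2 Ws pW x = 0.
Proof.
move=> Wn0 mono; apply: supW_cst => // w wW.
by rewrite plow_w_nonincr // subrr mul0r.
Qed.

Definition model2_at q (t : R) (g0 g1 : R -> R) : Prop :=
  [/\ 0 <= t <= 1,
      forall w, w \in Ws -> [/\ 0 <= g0 w <= 1, 0 <= g1 w <= 1 & g0 w + g1 w <= 1],
      forall w1 w2, w1 \in Ws -> w2 \in Ws -> w2 < w1 ->
        g0 w1 <= g0 w2 /\ g1 w1 <= g1 w2
    & forall w, w \in Ws -> q w = g0 w * (1 - t) + (1 - g1 w) * t].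

Lemma model2P pW ps a0 a1 :
  valid2 Ws ps a0 a1 /\ generates2 Ws pW ps a0 a1 <->
  forall x, model2_at (pW x) (ps x) (a0 x) (a1 x).
Proof.
split=> [[[ps01 a01 mono] gen] x | loc].
  by split=> [|w|w1 w2|w]; [exact: ps01 | exact: a01 | exact: mono | exact: gen].
by split; first split; move=> x; have [] := loc x.
Qed.

Lemma model2_update pW ps a0 a1 x t g0 g1 :
  valid2 Ws ps a0 a1 /\ generates2 Ws pW ps a0 a1 -> model2_at (pW x) t g0 g1 ->
  exists ps' a0' a1', [/\ valid2 Ws ps' a0' a1', generates2 Ws pW ps' a0' a1',
                         ps' x = t, a0' x = g0 & a1' x = g1].
Proof.
move=> /model2P loc loc_x.
have [g [gP gx]] := exists_update
  (P := fun x' (m : (R * (R -> R) * (R -> R))%type) => model2_at (pW x') m.1.1 m.1.2 m.2)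
  (g := fun x' => (ps x', a0 x', a1 x')) (b := (t, g0, g1)) loc loc_x.
exists (fun x' => (g x').1.1), (fun x' => (g x').1.2), (fun x' => (g x').2).
by have [_ /(_ gP) [? ?]] := model2P pW (fun x' => (g x').1.1)
  (fun x' => (g x').1.2) (fun x' => (g x').2); rewrite gx.
Qed.

Lemma model2_compl pW pW' ps (ps' : X -> R) a0 a1 :
  (forall x w, pW' x w = 1 - pW x w) -> (forall x, ps' x = 1 - ps x) ->
  valid2 Ws ps a0 a1 /\ generates2 Ws pW ps a0 a1 ->
  valid2 Ws ps' a1 a0 /\ generates2 Ws pW' ps' a1 a0.
Proof.
move=> pW'E ps'E /model2P loc; apply/model2P => x.
have [/andP[? ?] a01 mono pWE] := loc x; split.
- by rewrite ps'E; apply/andP; split; lra.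
- by move=> w /a01 [? ? ?]; split; rewrite // addrC.
- by move=> w1 w2 w1W w2W /(mono _ _ w1W w2W) [].
- by move=> w wW; rewrite pW'E ps'E pWE //; ring.
Qed.

Lemma ident2_no_fn_compl pW x s :
  ident2_no_fn Ws pW x s <-> ident2_no_fp Ws (fun x w => 1 - pW x w) x (1 - s).
Proof.
split=> [[ps [a0 [a1 [v gen a1x <-]]]] | [ps [a0 [a1 [v gen a0x pss]]]]].
  exists (fun x => 1 - ps x), a1, a0.
  by have [] := @model2_compl pW _ ps _ a0 a1
    (fun _ _ => erefl) (fun _ => erefl) (conj v gen).
exists (fun x => 1 - ps x), a1, a0.
have [] := @model2_compl _ pW ps _ a0 a1 _ (fun _ => erefl) (conj v gen).
  by move=> ? ?; rewrite opprB addrC subrK.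
by move=> ? ?; split; rewrite // pss opprB addrC subrK.
Qed.

Lemma no_fp2_nondecr q t g0 g1 :
  model2_at q t g0 g1 -> (forall w, w \in Ws -> g0 w = 0) ->
  {in Ws &, {homo q : w1 w2 / w1 <= w2}}.
Proof.
move=> [/andP[t0 _] _ mono qE] g00 w1 w2 w1W w2W.
rewrite le_eqVlt => /orP[/eqP-> // | lt12].
have [_ g1le] := mono w2 w1 w2W w1W lt12.
by rewrite !qE // !g00 //; nra.
Qed.

Lemma no_fp2_model q t :
  {in Ws, forall w, 0 <= q w <= t} -> {in Ws &, {homo q : w1 w2 / w1 <= w2}} ->
  0 < t <= 1 -> model2_at q t (fun=> 0) (fun w => 1 - q w / t).
Proof.
move=> q0t mono /andP[t0 t1]; split=> [|w wW|w1 w2 w1W w2W lt21|w wW].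
- by rewrite ltW.
- have /andP[q0 qt] := q0t w wW.
  have qt1 : q w / t <= 1 by rewrite ler_pdivrMr // mul1r.
  have qt0 : 0 <= q w / t by rewrite divr_ge0 // ltW.
  by split; rewrite ?lexx ?ler01 //; [apply/andP; split|]; lra.
- split=> //; rewrite lerD2l lerN2 ler_pM2r ?invr_gt0 //.
  by apply: mono => //; exact: ltW.
- by field; rewrite gt_eqF.
Qed.

Lemma no_fp2_range q t :
  Ws != [::] -> {in Ws, forall w, 0 < q w} -> {in Ws &, {homo q : w1 w2 / w1 <= w2}} ->
  (exists g0 g1, model2_at q t g0 g1 /\ forall w, w \in Ws -> g0 w = 0) <->
  supW Ws q <= t <= 1.
Proof.
move=> /head_in hW q0 mono.
split=> [[g0 [g1 [[/andP[t0 t1] g01 _ qE] g00]]] | /andP[qt t1]].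
  have qt w : w \in Ws -> q w <= t.
    by move=> wW; have [_ /andP[? ?] _] := g01 w wW; rewrite qE // g00 //; nra.
  by rewrite t1 andbT /supW big_seq; apply: bigmax_le; [exact: qt | exact: qt].
have qwt w : w \in Ws -> q w <= t.
  by move=> wW; apply: le_trans qt; exact: le_bigmax_seq.
exists (fun=> 0), (fun w => 1 - q w / t); split=> //; apply: no_fp2_model => //.
  by move=> w wW; rewrite qwt // ltW // q0.
by rewrite t1 andbT (lt_le_trans (q0 _ hW)) // qwt.
Qed.

Lemma model2_no_fp_nondecr pW x :
  (exists ps a0 a1, [/\ valid2 Ws ps a0 a1, generates2 Ws pW ps a0 a1
                      & forall w, w \in Ws -> a0 x w = 0]) ->
  {in Ws &, {homo pW x : w1 w2 / w1 <= w2}}.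
Proof.
case=> ps [a0 [a1 [v gen a00]]].
by have /model2P/(_ x) loc := conj v gen; exact: no_fp2_nondecr loc a00.
Qed.

Lemma ident2_no_fpE pW x :
  Ws != [::] -> {in Ws, forall w, 0 < pW x w} ->
  (exists ps a0 a1, [/\ valid2 Ws ps a0 a1, generates2 Ws pW ps a0 a1
                      & forall w, w \in Ws -> a0 x w = 0]) ->
  forall s, ident2_no_fp Ws pW x s <-> supW Ws (pW x) <= s <= 1.
Proof.
move=> Wn0 pW0 model0 s.
rewrite -no_fp2_range //; last exact: model2_no_fp_nondecr.
have [ps0 [a00 [a10 [v0 gen0 _]]]] := model0.
split=> [[ps [a0 [a1 [v gen a0x <-]]]] | [g0 [g1 [loc g00]]]].
  have /model2P loc := conj v gen.
  by exists (a0 x), (a1 x); split; [exact: loc | exact: a0x].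
have [ps [a0 [a1 [v gen psx a0x _]]]] := model2_update (conj v0 gen0) loc.
by exists ps, a0, a1; rewrite psx a0x.
Qed.

Lemma ident2_no_fp_range pW x :
  Ws != [::] -> {in Ws, forall w, 0 < pW x w} ->
  (exists ps a0 a1, [/\ valid2 Ws ps a0 a1, generates2 Ws pW ps a0 a1
                      & forall w, w \in Ws -> a0 x w = 0]) ->
  forall s, ident2_no_fp Ws pW x s <-> supW Ws (pW x) <= s <= U2 Ws pW x.
Proof.
move=> Wn0 pW0 model0; rewrite U2_nondecr //; last exact: model2_no_fp_nondecr.
exact: ident2_no_fpE.
Qed.

Lemma ident2_no_fn_range pW x :
  Ws != [::] -> {in Ws, forall w, pW x w < 1} ->
  (exists ps a0 a1, [/\ valid2 Ws ps a0 a1, generates2 Ws pW ps a0 a1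
                      & forall w, w \in Ws -> a1 x w = 0]) ->
  forall s, ident2_no_fn Ws pW x s <-> L2 Ws pW x <= s <= infW Ws (pW x).
Proof.
move=> Wn0 pW1 [ps [a0 [a1 [v gen a10]]]] s.
have model' : exists ps a0 a1, [/\ valid2 Ws ps a0 a1,
    generates2 Ws (fun x w => 1 - pW x w) ps a0 a1 & forall w, w \in Ws -> a0 x w = 0].
  exists (fun x => 1 - ps x), a1, a0.
  by have [] := @model2_compl pW _ ps _ a0 a1
    (fun _ _ => erefl) (fun _ => erefl) (conj v gen).
have supW_compl : supW Ws (fun w => 1 - pW x w) = 1 - infW Ws (pW x).
  exact: bigmax_compl.
rewrite L2_nonincr // => [|w1 w2 w1W w2W w12]; last first.
  by have := model2_no_fp_nondecr model' w1W w2W w12; rewrite lerD2l lerN2.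
rewrite ident2_no_fn_compl ident2_no_fpE // => [|w wW]; last by rewrite subr_gt0 pW1.
rewrite supW_compl; split=> /andP[? ?]; apply/andP; split; lra.
Qed.
End MonotoneInstrument.

Theorem proposition3 :
  (forall (R : realFieldType) (Xt : Type) (Z : finType) (p : Xt -> Z -> R),
     (forall (xt : Xt) (z0 : Z), 0 < psupZ p xt z0 /\ pinfZ p xt z0 < 1) ->
     forall (xt : Xt) (z : Z),
       ((exists ps a0 a1, [/\ valid1 ps a0 a1, generates1 p ps a0 a1 & a0 xt = 0]) ->
          forall s : R, ident1_no_fp p xt z s <-> p xt z <= s <= U1 p xt z) /\
       ((exists ps a0 a1, [/\ valid1 ps a0 a1, generates1 p ps a0 a1 & a1 xt = 0]) ->
          forall s : R, ident1_no_fn p xt z s <-> L1 p xt z <= s <= p xt z)) /\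
  (forall (R : realFieldType) (X : Type) (Ws : seq R) (pW : X -> R -> R),
     Ws != [::] ->
     (forall (x : X) (w : R), w \in Ws -> 0 < pW x w < 1) ->
     forall x : X,
       ((exists ps a0 a1, [/\ valid2 Ws ps a0 a1, generates2 Ws pW ps a0 a1
                            & forall w, w \in Ws -> a0 x w = 0]) ->
          forall s : R, ident2_no_fp Ws pW x s <->
                        supW Ws (pW x) <= s <= U2 Ws pW x) /\
       ((exists ps a0 a1, [/\ valid2 Ws ps a0 a1, generates2 Ws pW ps a0 a1
                            & forall w, w \in Ws -> a1 x w = 0]) ->
          forall s : R, ident2_no_fn Ws pW x s <->
                        L2 Ws pW x <= s <= infW Ws (pW x))).
Proof.
split=> [R Xt Z p bounds xt z | R X Ws pW Wn0 pW01 x].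
  have [M0 m1] := bounds xt z.
  split=> -[ps [a0 [a1 [v gen _]]]].
  - by apply: (ident1_no_fp_range M0); exists ps, a0, a1.
  - by apply: (ident1_no_fn_range m1); exists ps, a0, a1.
have pW0 : {in Ws, forall w, 0 < pW x w} by move=> w /(pW01 x) /andP[].
have pW1 : {in Ws, forall w, pW x w < 1} by move=> w /(pW01 x) /andP[].
by split=> model0; [exact: ident2_no_fp_range | exact: ident2_no_fn_range].
Qed.
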